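(* Let $\alpha_1,\alpha_2,\alpha_3,\alpha_4$ be positive integers. The graph $C(\alpha_1,\alpha_2,\alpha_3,\alpha_4)$ has exactly four distinct Laplacian eigenvalues if and only if, writing $\alpha=\alpha_1$, it is one of $C(\alpha,1,1,1)$, $C(\alpha,1,1+\alpha,1)$, $C(\alpha,1,1,2+\alpha)$, $C(\alpha,1,1+\alpha,1+\alpha)$, $C(\alpha,1,1+\alpha,2+2\alpha)$. Consequently, these are exactly the $\mathcal{C}$-graphs (with an even number $k$ of parts) having exactly four distinct Laplacian eigenvalues.
   Context: $C(\alpha_1,\dots,\alpha_k)$ is defined recursively by $C(\alpha_1)=\overline{K_{\alpha_1}}$ (edgeless graph) and $C(\alpha_1,\dots,\alpha_i)=\overline{C(\alpha_1,\dots,\alpha_{i-1})\cup K_{\alpha_i}}$ for $i=2,\dots,k$ (disjoint union, then complement); with $k$ even it is called a $\mathcal{C}$-graph. Equivalently for $k$ even, with $\pi_i$ the $\alpha_i$ vertices introduced at step $i$: $\pi_i$ is a clique for $i$ odd, independent for $i$ even, and for $i<j$ vertices of $\pi_i,\pi_j$ are adjacent iff $j$ is even. Laplacian eigenvalues are those of $L=D-A$. *)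

From HB Require Import structures.
From mathcomp Require Import all_boot all_order all_algebra all_field.
Set Implicit Arguments. Unset Strict Implicit. Unset Printing Implicit Defensive.
Import Order.TTheory GRing.Theory Num.Theory.
Local Open Scope ring_scope.

(* A C-graph C(s) for s = [:: a_1; ...; a_k] (k even, all a_i > 0) has
   vertex set 'I_(sumn s).  Vertex v (a natural number < sumn s) belongs to
   the block pi_(b+1), where b = cblk s v is the 0-based block index: the
   least b with v < a_1 + ... + a_(b+1). *)
Definition cblk (s : seq nat) (v : nat) : nat :=
  find (fun i => (v < sumn (take i.+1 s))%N) (iota 0 (size s)).

(* Adjacency (k even), following the paper's equivalent description with
   1-based block index i = b+1: pi_i is a clique for i odd (b even) and
   independent for i even (b odd); for i < j, pi_i and pi_j are completely
   joined iff j is even (i.e. the larger 0-based index is odd). *)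
Definition cadj (s : seq nat) (u v : nat) : bool :=
  (u != v) &&
  (if cblk s u == cblk s v then ~~ odd (cblk s u)
   else odd (maxn (cblk s u) (cblk s v))).

Definition cgraph_lap (s : seq nat) : 'M[algC]_(sumn s) :=
  \matrix_(i, j)
    (if i == j then (#|[set x : 'I_(sumn s) | cadj s i x]|)%:R
     else - (cadj s i j)%:R).

Definition num_distinct_eigenvalues_eq (n : nat) (A : 'M[algC]_n) (m : nat) :=
  exists es : seq algC, [/\ uniq es, size es = m &
    forall a : algC, eigenvalue A a <-> a \in es].

Definition four_eig_family (a1 a2 a3 a4 : nat) : Prop :=
  (a2 = 1%N /\ a3 = 1%N /\ a4 = 1%N) \/
  (a2 = 1%N /\ a3 = (1 + a1)%N /\ a4 = 1%N) \/
  (a2 = 1%N /\ a3 = 1%N /\ a4 = (2 + a1)%N) \/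
  (a2 = 1%N /\ a3 = (1 + a1)%N /\ a4 = (1 + a1)%N) \/
  (a2 = 1%N /\ a3 = (1 + a1)%N /\ a4 = (2 + 2 * a1)%N).

From mathcomp Require Import all_boot all_order all_algebra all_field.
From mathcomp Require Import zify ring.
Set Implicit Arguments. Unset Strict Implicit. Unset Printing Implicit Defensive.
Import Order.TTheory GRing.Theory Num.Theory.

(* The vertices of C(a_0, ..., a_(k-1)) come in consecutive blocks of sizes
   a_c, and whether two distinct vertices are adjacent depends only on their
   blocks (relation [joined]).  This equitable partition yields two families
   of Laplacian eigenvectors:
   - in a block b of size >= 2, the difference of two of its vertices, with
     eigenvalue [bdeg b], the total size of the blocks joined to b;
   - lifts of eigenvectors of the k x k quotient operator [quot], namely the
     constant vector (eigenvalue 0) and explicit "triangular" vectors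
     [qvec m] (1 <= m < k) with eigenvalues [qeig m].
   Conversely, an eigenvector whose eigenvalue differs from every [bdeg b] is
   constant on blocks; and [quot] is self-adjoint for the bilinear form
   weighted by the block sizes, so a quotient eigenvector with an eigenvalue
   outside {0, qeig m} is orthogonal to all the vectors above, hence zero.
   This describes the spectrum as the values of an explicit list of naturals
   [cgraph_spectrum s] (theorem [cgraph_eigenvalueE]).  The main theorem then
   counts distinct entries: for k = 4 the count is 4 exactly on the five
   families, for k = 2 it is at most 3, and for k >= 6 it is at least 5. *)

Section Blocks.

Variable s : seq nat.

Definition psum (m : nat) : nat := \sum_(c < m) nth 0 s c.

Lemma psumS m : psum m.+1 = psum m + nth 0 s m.
Proof. by rewrite /psum big_ord_recr. Qed.

Lemma psum_mono : {homo psum : m n / m <= n}.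
Proof.
move=> m n /subnK <-; elim: (n - m) => //= d IH.
by rewrite addSn psumS (leq_trans IH) ?leq_addr.
Qed.

Lemma psum_take m : sumn (take m s) = psum m.
Proof.
rewrite /psum; elim: s m => [|x t IH] [|m] /=; rewrite ?big_ord0 //.
  by rewrite big1 // => c _; rewrite nth_nil.
by rewrite big_ord_recl IH.
Qed.

Lemma psum_size : psum (size s) = sumn s.
Proof. by rewrite -psum_take take_size. Qed.

Lemma cblk_bounds v : v < sumn s ->
  [/\ cblk s v < size s, psum (cblk s v) <= v & v < psum (cblk s v).+1].
Proof.
move=> v_lt; have s_gt0 : 0 < size s by case: (s) v_lt.
pose P i := v < psum i.+1.
have cblk_find : cblk s v = find P (iota 0 (size s)).
  by apply: eq_find => i; rewrite /P -psum_take.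
have hasP : has P (iota 0 (size s)).
  apply/hasP; exists (size s).-1; first by rewrite mem_iota; lia.
  by rewrite /P prednK // psum_size.
have lt_k : cblk s v < size s.
  by rewrite cblk_find -[X in _ < X](size_iota 0) -has_find.
split => //; last first.
  by have := nth_find 0 hasP; rewrite -cblk_find nth_iota.
move: lt_k; rewrite cblk_find; case E: (find _ _) => [|b] lt_k.
  by rewrite /psum big_ord0.
have := @before_find _ 0 P (iota 0 (size s)) b; rewrite E nth_iota; last lia.
by move=> /(_ (ltnSn b)) /negbT; rewrite /P add0n -leqNgt.
Qed.

Lemma cblk_eq v c : c < size s -> psum c <= v < psum c.+1 -> cblk s v = c.
Proof.
move=> c_lt /andP[lo hi].
have v_lt : v < sumn s by rewrite -psum_size (leq_trans hi) ?psum_mono.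
have [_ lo' hi'] := cblk_bounds v_lt.
by case: (ltngtP (cblk s v) c) => // /psum_mono; lia.
Qed.

Lemma block_first_vertex c : c < size s -> 0 < nth 0 s c ->
  psum c < sumn s /\ cblk s (psum c) = c.
Proof.
move=> c_lt c_pos; have := psum_mono c_lt; rewrite psum_size psumS => le_sum.
by split; [lia | apply: cblk_eq => //; rewrite psumS; lia].
Qed.

Lemma sum_blocks (V : nmodType) (F : nat -> V) :
  (\sum_(i < sumn s) F (cblk s i) = \sum_(c < size s) F c *+ nth 0%N s c)%R.
Proof.
suff part_sum m : m <= size s ->
    (\sum_(0 <= i < psum m) F (cblk s i) = \sum_(c < m) F c *+ nth 0%N s c)%R.
  by rewrite -psum_size -(big_mkord xpredT (fun i => F (cblk s i))) part_sum.
elim: m => [|m IH] le_m; first by rewrite /psum !big_ord0 big_geq.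
rewrite big_ord_recr -IH /=; last exact: ltnW.
rewrite psumS (big_cat_nat (leq0n (psum m)) (leq_addr (nth 0%N s m) (psum m))) /=.
congr (_ + _)%R; rewrite -[in RHS](addKn (psum m) (nth 0%N s m)) -sumr_const_nat.
by apply: eq_big_nat => i lim; rewrite (cblk_eq le_m) // psumS.
Qed.

End Blocks.

Local Open Scope ring_scope.

Definition joined (b c : nat) : bool :=
  if b == c then ~~ odd b else odd (maxn b c).

Lemma joinedC b c : joined b c = joined c b.
Proof. by rewrite /joined eq_sym maxnC; case: eqP => // ->. Qed.

Lemma joined_lt b c : (b < c)%N -> joined b c = odd c.
Proof. by move=> lt_bc; rewrite /joined ltn_eqF // (maxn_idPr (ltnW lt_bc)). Qed.

Lemma cadjE s u v : cadj s u v = (u != v) && joined (cblk s u) (cblk s v).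
Proof. by []. Qed.

Section Laplacian.

Variable s : seq nat.

Lemma sum_blocksR (F : nat -> algC) :
  \sum_(i < sumn s) F (cblk s i) = \sum_(c < size s) (nth 0%N s c)%:R * F c.
Proof. by rewrite sum_blocks; under eq_bigr do rewrite -mulr_natl. Qed.

Definition bdeg (b : nat) : nat := (\sum_(c < size s | joined b c) nth 0 s c)%N.

Lemma bdegE b :
  (bdeg b)%:R = \sum_(c < size s) (nth 0%N s c)%:R * (joined b c)%:R :> algC.
Proof.
rewrite natr_sum big_mkcond; apply: eq_bigr => c _.
by case: joined; rewrite ?mulr1 ?mulr0.
Qed.

Lemma degreeE (j : 'I_(sumn s)) :
  (#|[set x : 'I_(sumn s) | cadj s j x]|)%:R
  = (bdeg (cblk s j))%:R - (joined (cblk s j) (cblk s j))%:R :> algC.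
Proof.
rewrite cardsE -sum1_card natr_sum big_mkcond /= bdegE.
rewrite -(sum_blocksR (fun c => (joined (cblk s j) c)%:R)).
rewrite [in RHS](bigD1 j) //= addrAC subrr add0r (bigD1 j) //= unfold_in eqxx add0r.
apply: eq_bigr => i ne_ij; rewrite unfold_in /= eq_sym ne_ij -/(joined _ _).
by case: joined.
Qed.

Lemma lap_row (v : 'rV[algC]_(sumn s)) j :
  (v *m cgraph_lap s) 0 j = (bdeg (cblk s j))%:R * v 0 j
    - \sum_(i < sumn s) (joined (cblk s j) (cblk s i))%:R * v 0 i.
Proof.
rewrite mxE (bigD1 j) //= !mxE eqxx degreeE [in RHS](bigD1 j) //=.
rewrite (eq_bigr (fun i : 'I_(sumn s) => - ((joined (cblk s j) (cblk s i))%:R * v 0 i))).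
  by rewrite sumrN; ring.
move=> i ne_ij; rewrite !mxE (negbTE ne_ij) cadjE (inj_eq val_inj) ne_ij /=.
by rewrite joinedC mulrN mulrC.
Qed.

Definition quot (f : nat -> algC) (b : nat) : algC :=
  \sum_(c < size s) (nth 0%N s c)%:R * (joined b c)%:R * (f b - f c).

Lemma lap_lift (f : nat -> algC) (v : 'rV[algC]_(sumn s)) :
  (forall i, v 0 i = f (cblk s i)) ->
  forall j, (v *m cgraph_lap s) 0 j = quot f (cblk s j).
Proof.
move=> vE j; rewrite lap_row vE; under eq_bigr do rewrite vE.
rewrite bdegE mulr_suml (sum_blocksR (fun c => (joined (cblk s j) c)%:R * f c)) -sumrB.
by apply: eq_bigr => c _; ring.
Qed.

Lemma lift_eigenvalue (f : nat -> algC) x b0 :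
  (b0 < size s)%N -> (0 < nth 0 s b0)%N -> f b0 != 0 ->
  (forall b, (b < size s)%N -> quot f b = x * f b) ->
  eigenvalue (cgraph_lap s) x.
Proof.
move=> lt_b0 pos_b0 nz_f quotE; apply/eigenvalueP.
exists (\row_i f (cblk s i)).
  apply/rowP => j; rewrite (lap_lift (f := f)) => [|i]; last by rewrite mxE.
  by rewrite !mxE quotE //; case: (cblk_bounds (ltn_ord j)).
have [lt_p p_b0] := block_first_vertex lt_b0 pos_b0.
apply: contra nz_f => /eqP /rowP /(_ (Ordinal lt_p)).
by rewrite !mxE /= p_b0 => ->.
Qed.

Lemma sum_delta n (G : 'I_n -> algC) p : \sum_i G i * (i == p)%:R = G p.
Proof.
rewrite (bigD1 p) //= eqxx mulr1 big1 ?addr0 // => i /negbTE ->.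
by rewrite mulr0.
Qed.

(* Two vertices p, q of a block b of size >= 2: e_p - e_q has eigenvalue bdeg b. *)
Lemma block_eigenvalue b : (b < size s)%N -> (1 < nth 0 s b)%N ->
  eigenvalue (cgraph_lap s) (bdeg b)%:R.
Proof.
move=> lt_b big_b; have := psum_mono s lt_b; rewrite psum_size psumS => le_sum.
have lt_p : (psum s b < sumn s)%N by lia.
have lt_q : ((psum s b).+1 < sumn s)%N by lia.
pose p := Ordinal lt_p; pose q := Ordinal lt_q.
have in_b (i : 'I_(sumn s)) : (i == p) || (i == q) -> cblk s i = b.
  by case/orP => /eqP ->; apply: cblk_eq => //=; rewrite psumS; lia.
have ne_pq : (p == q) = false by rewrite -(inj_eq val_inj) /=; lia.
apply/eigenvalueP; exists (\row_i ((i == p)%:R - (i == q)%:R)); last first.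
  apply/eqP => /rowP /(_ p); rewrite !mxE eqxx ne_pq subr0 => /eqP.
  by rewrite oner_eq0.
apply/rowP => j; rewrite lap_row !mxE.
under eq_bigr do rewrite mxE mulrBr.
rewrite sumrB !sum_delta (in_b p) ?eqxx // (in_b q) ?eqxx ?orbT // subrr subr0.
case: (boolP ((j == p) || (j == q))) => [/in_b -> // | ].
by rewrite negb_or => /andP[/negbTE-> /negbTE->]; rewrite subrr !mulr0.
Qed.

End Laplacian.

Section QuotientEigenvectors.

Variable s : seq nat.

Lemma sum_split3 (F : nat -> algC) m : (m < size s)%N ->
  \sum_(c < size s) F c = \sum_(c < size s | (c < m)%N) F c + F m
                          + \sum_(c < size s | (m < c)%N) F c.
Proof.
move=> lt_m; rewrite (bigD1 (Ordinal lt_m)) //= addrC.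
rewrite (bigID (fun c : 'I_(size s) => (c < m)%N)) /= addrAC.
by congr (_ + _ + _); apply: eq_bigl => c; rewrite -(inj_eq val_inj) /=; case: ltngtP.
Qed.

Lemma sum_below m (K : algC) : (m <= size s)%N ->
  \sum_(c < size s | (c < m)%N) (nth 0%N s c)%:R * K = (psum s m)%:R * K.
Proof.
move=> le_m; rewrite -mulr_suml -natr_sum /psum.
by rewrite (big_ord_widen _ (fun c => nth 0 s c) le_m).
Qed.

Definition odd_tail (m : nat) : nat :=
  (\sum_(c < size s | (m < c) && odd c) nth 0 s c)%N.

Lemma odd_tailE m (K : algC) :
  \sum_(c < size s | (m < c)%N) (nth 0%N s c)%:R * (odd c)%:R * K
  = (odd_tail m)%:R * K.
Proof.
rewrite -mulr_suml natr_sum big_mkcondr /=; congr (_ * _).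
by apply: eq_bigr => c _; case: odd; rewrite ?mulr1 ?mulr0.
Qed.

Lemma quot_const b : quot s (fun=> 1) b = 0.
Proof. by rewrite /quot big1 // => c _; rewrite subrr mulr0. Qed.

Definition qvec (m c : nat) : algC :=
  if (c < m)%N then (nth 0%N s m)%:R else if c == m then - (psum s m)%:R else 0.

Lemma qvec_below m c : (c < m)%N -> qvec m c = (nth 0%N s m)%:R.
Proof. by rewrite /qvec => ->. Qed.

Lemma qvec_diag m : qvec m m = - (psum s m)%:R.
Proof. by rewrite /qvec ltnn eqxx. Qed.

Lemma qvec_above m c : (m < c)%N -> qvec m c = 0.
Proof. by move=> lt_mc; rewrite /qvec ltnNge ltnW //= gtn_eqF. Qed.

Definition qeig (m : nat) : nat := (odd m * psum s m.+1 + odd_tail m)%N.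

Lemma quot_qvec m b : (m < size s)%N ->
  quot s (qvec m) b = (qeig m)%:R * qvec m b.
Proof.
move=> lt_m; rewrite /quot.
rewrite (sum_split3 (fun c => (nth 0%N s c)%:R * (joined b c)%:R * (qvec m b - qvec m c)) lt_m).
rewrite /qeig natrD natrM psumS natrD qvec_diag; set am := (nth 0%N s m)%:R.
case: (ltngtP b m) => [lt_bm | lt_mb | ->].
- have below : \sum_(c < size s | (c < m)%N)
                 (nth 0%N s c)%:R * (joined b c)%:R * (qvec m b - qvec m c) = 0.
    by rewrite big1 // => c lt_cm; rewrite !qvec_below // subrr mulr0.
  have above : \sum_(c < size s | (m < c)%N)
                 (nth 0%N s c)%:R * (joined b c)%:R * (qvec m b - qvec m c)
             = (odd_tail m)%:R * am.
    rewrite -odd_tailE; apply: eq_bigr => c lt_mc.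
    by rewrite (joined_lt (ltn_trans lt_bm lt_mc)) qvec_below // qvec_above // subr0.
  by rewrite below above qvec_below // (joined_lt lt_bm); ring.
- have below : \sum_(c < size s | (c < m)%N)
                 (nth 0%N s c)%:R * (joined b c)%:R * (qvec m b - qvec m c)
             = (psum s m)%:R * ((odd b)%:R * - am).
    rewrite -sum_below; last exact: ltnW.
    apply: eq_bigr => c lt_cm; rewrite joinedC (joined_lt (ltn_trans lt_cm lt_mb)).
    by rewrite qvec_above // qvec_below //; ring.
  have above : \sum_(c < size s | (m < c)%N)
                 (nth 0%N s c)%:R * (joined b c)%:R * (qvec m b - qvec m c) = 0.
    rewrite big1 // => c lt_mc.
    by rewrite !qvec_above ?subrr ?mulr0 // (ltn_trans lt_mc).
  by rewrite below above qvec_above // joinedC (joined_lt lt_mb); ring.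
- have below : \sum_(c < size s | (c < m)%N)
                 (nth 0%N s c)%:R * (joined m c)%:R * (qvec m m - qvec m c)
             = (psum s m)%:R * ((odd m)%:R * (- (psum s m)%:R - am)).
    rewrite -sum_below; last exact: ltnW.
    apply: eq_bigr => c lt_cm.
    by rewrite joinedC (joined_lt lt_cm) qvec_diag (qvec_below lt_cm); ring.
  have above : \sum_(c < size s | (m < c)%N)
                 (nth 0%N s c)%:R * (joined m c)%:R * (qvec m m - qvec m c)
             = (odd_tail m)%:R * - (psum s m)%:R.
    rewrite -odd_tailE; apply: eq_bigr => c lt_mc.
    by rewrite (joined_lt lt_mc) qvec_diag (qvec_above lt_mc) subr0.
  by rewrite below above qvec_diag; ring.
Qed.

End QuotientEigenvectors.

Section Converse.

Variable s : seq nat.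
Hypothesis s_pos : all (fun a => 0 < a)%N s.

Lemma nth_pos c : (c < size s)%N -> (0 < nth 0 s c)%N.
Proof. by move=> lt_c; apply: (allP s_pos); apply: mem_nth. Qed.

Lemma psum_gt0 m : (0 < m <= size s)%N -> (0 < psum s m)%N.
Proof. by case: m => // m le_m; rewrite psumS addn_gt0 nth_pos ?orbT. Qed.

(* Unless x is some bdeg b of a block of size >= 2, an eigenvector for x is
   constant on every block (compare rows j and the first vertex of its block). *)
Lemma eigenvector_blockwise (v : 'rV[algC]_(sumn s)) x :
  v *m cgraph_lap s = x *: v ->
  (forall b, (b < size s)%N -> (1 < nth 0 s b)%N -> x != (bdeg s b)%:R) ->
  exists f : nat -> algC, forall j, v 0 j = f (cblk s j).
Proof.
move=> eig x_ne; exists (fun b => oapp (fun i => v 0 i) 0 (insub (psum s b))) => j.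
have [lt_b lo hi] := cblk_bounds (ltn_ord j); set b := cblk s j in lt_b lo hi *.
have [lt_p p_b] := block_first_vertex lt_b (nth_pos lt_b).
rewrite insubT /=; set p := Sub (psum s b) lt_p.
have rowE (i : 'I_(sumn s)) : x * v 0 i = (bdeg s (cblk s i))%:R * v 0 i
    - \sum_(i' < sumn s) (joined (cblk s i) (cblk s i'))%:R * v 0 i'.
  by rewrite -lap_row eig !mxE.
case: (leqP (nth 0%N s b) 1) => [small | big].
  by congr (v 0 _); apply: val_inj => /=; rewrite psumS in hi; lia.
have : ((bdeg s b)%:R - x) * (v 0 j - v 0 p) = 0.
  have := rowE p; rewrite /= p_b -/b => eq_p.
  by rewrite mulrBr !mulrBl rowE eq_p; ring.
move/eqP; rewrite mulf_eq0 subr_eq0 eq_sym (negbTE (x_ne b lt_b big)) subr_eq0.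
by move/eqP.
Qed.

Lemma eigenvalue_cases x : eigenvalue (cgraph_lap s) x ->
  (exists2 b, (b < size s)%N & (1 < nth 0 s b)%N /\ x = (bdeg s b)%:R) \/
  exists f : nat -> algC, (exists2 b0, (b0 < size s)%N & f b0 != 0) /\
    forall b, (b < size s)%N -> quot s f b = x * f b.
Proof.
move=> /eigenvalueP [v eig nz_v].
case: (boolP [exists b : 'I_(size s), (1 < nth 0 s b)%N && (x == (bdeg s b)%:R)]).
  by case/existsP => b /andP[big /eqP ->]; left; exists b.
move=> /existsPn no_block; right.
have [b lt_b big|f vE] := eigenvector_blockwise eig.
  by have := no_block (Ordinal lt_b); rewrite big.
exists f; split.
  have /existsP [j nz_j] : [exists j, v 0 j != 0].
    apply: contraR nz_v => /existsPn zero_v; apply/eqP/rowP => j.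
    by rewrite mxE; apply/eqP/negbNE/zero_v.
  by exists (cblk s j); [case: (cblk_bounds (ltn_ord j)) | rewrite -vE].
move=> b lt_b; have [lt_p p_b] := block_first_vertex lt_b (nth_pos lt_b).
have := lap_lift vE (Ordinal lt_p); rewrite eig !mxE /= p_b => <-.
by rewrite vE p_b.
Qed.

Definition wdot (f g : nat -> algC) : algC :=
  \sum_(c < size s) (nth 0%N s c)%:R * f c * g c.

Lemma wdot_quotC f g : wdot (quot s f) g = wdot f (quot s g).
Proof.
pose w b c : algC := (nth 0%N s b)%:R * (nth 0%N s c)%:R * (joined b c)%:R.
apply/eqP; rewrite -subr_eq0 /wdot /quot -sumrB.
rewrite (eq_bigr (fun b : 'I_(size s) => \sum_(c < size s) w b c * f b * g c
                                      - \sum_(c < size s) w b c * f c * g b)); last first.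
  move=> b _; rewrite !mulr_sumr mulr_suml -!sumrB; apply: eq_bigr => c _.
  by rewrite /w; ring.
rewrite sumrB [X in _ - X]exchange_big /= subr_eq0; apply/eqP.
by apply: eq_bigr => b _; apply: eq_bigr => c _; rewrite /w joinedC; ring.
Qed.

Lemma wdot_eig_orth f g x y :
  (forall b, (b < size s)%N -> quot s f b = x * f b) ->
  (forall b, (b < size s)%N -> quot s g b = y * g b) ->
  x != y -> wdot f g = 0.
Proof.
move=> eig_f eig_g ne_xy.
have eig_l : wdot (quot s f) g = x * wdot f g.
  by rewrite /wdot mulr_sumr; apply: eq_bigr => b _; rewrite eig_f //; ring.
have eig_r : wdot f (quot s g) = y * wdot f g.
  by rewrite /wdot mulr_sumr; apply: eq_bigr => b _; rewrite eig_g //; ring.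
have : (x - y) * wdot f g = 0 by rewrite mulrBl -eig_l -eig_r wdot_quotC subrr.
by move/eqP; rewrite mulf_eq0 subr_eq0 (negbTE ne_xy) => /eqP.
Qed.

Lemma wdot_qvec f m : (m < size s)%N ->
  wdot f (qvec s m) = (nth 0%N s m)%:R *
    (\sum_(c < size s | (c < m)%N) (nth 0%N s c)%:R * f c - (psum s m)%:R * f m).
Proof.
move=> lt_m; rewrite /wdot (sum_split3 (fun c => (nth 0%N s c)%:R * f c * qvec s m c) lt_m).
rewrite [X in _ + X]big1 ?addr0 => [|c lt_mc]; last by rewrite qvec_above // mulr0.
rewrite qvec_diag mulrBr mulr_sumr; congr (_ + _); last by ring.
by apply: eq_bigr => c lt_cm; rewrite qvec_below //; ring.
Qed.

(* The constant vector and the qvec m span all block functions: a block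
   function orthogonal to all of them is zero (by induction, it is constant,
   and then orthogonality to the constant vector kills it). *)
Lemma wdot_orth_zero f :
  wdot f (fun=> 1) = 0 ->
  (forall m, (0 < m < size s)%N -> wdot f (qvec s m) = 0) ->
  forall c, (c < size s)%N -> f c = 0.
Proof.
move=> orth1 orth_q.
have f_const m : (m < size s)%N -> forall c, (c <= m)%N -> f c = f 0%N.
  elim: m => [_ c|m IH lt_m c]; first by rewrite leqn0 => /eqP ->.
  rewrite leq_eqVlt => /orP[/eqP -> | ]; last by apply: IH; apply: ltnW.
  have := orth_q m.+1 lt_m; rewrite wdot_qvec //.
  rewrite (eq_bigr (fun d : 'I_(size s) => (nth 0%N s d)%:R * f 0%N)) => [|d lt_d].
    rewrite (sum_below _ (ltnW lt_m)) -mulrBr => /eqP; rewrite !mulf_eq0 subr_eq0 !pnatr_eq0.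
    rewrite (negbTE (lt0n_neq0 (nth_pos lt_m))).
    by rewrite (negbTE (lt0n_neq0 (@psum_gt0 m.+1 (ltnW lt_m)))) /= => /eqP.
  by rewrite (IH (ltnW lt_m)).
move=> c lt_c; have k_gt0 : (0 < size s)%N by apply: leq_ltn_trans lt_c.
have all_const d : (d < size s)%N -> f d = f 0%N.
  by move=> lt_d; apply: (f_const (size s).-1); lia.
rewrite all_const //; move: orth1; rewrite /wdot.
rewrite (eq_bigr (fun d : 'I_(size s) => (nth 0%N s d)%:R * f 0%N)) => [|d _].
  rewrite -mulr_suml -natr_sum -/(psum s (size s)) => /eqP.
  by rewrite mulf_eq0 pnatr_eq0 (negbTE (lt0n_neq0 (psum_gt0 _))) ?k_gt0 //= => /eqP.
by rewrite mulr1 all_const.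
Qed.

Lemma quot_eigenvalue f x b0 : (b0 < size s)%N -> f b0 != 0 ->
  (forall b, (b < size s)%N -> quot s f b = x * f b) ->
  x = 0 \/ exists2 m, (0 < m < size s)%N & x = (qeig s m)%:R.
Proof.
move=> lt_b0 nz_f eig_f.
case: (boolP [exists m : 'I_(size s), (0 < m)%N && (x == (qeig s m)%:R)]).
  by case/existsP => m /andP[pos_m /eqP ->]; right; exists m; rewrite ?pos_m ?ltn_ord.
move=> /existsPn not_qeig; case: (eqVneq x 0) => [|nz_x]; [by left | exfalso].
move/negP: nz_f; apply; apply/eqP; apply: wdot_orth_zero => //.
  apply: (wdot_eig_orth eig_f (y := 0)) => // b _.
  by rewrite quot_const mul0r.
move=> m /andP[pos_m lt_m].
apply: (wdot_eig_orth (y := (qeig s m)%:R) eig_f) => [b _|]; first exact: quot_qvec.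
by have := not_qeig (Ordinal lt_m); rewrite /= pos_m.
Qed.

End Converse.

Definition quot_spectrum (s : seq nat) : seq nat :=
  0%N :: [seq qeig s m | m <- iota 1 (size s).-1].

Definition block_spectrum (s : seq nat) : seq nat :=
  [seq bdeg s b | b <- iota 0 (size s) & (1 < nth 0 s b)%N].

Definition cgraph_spectrum (s : seq nat) : seq nat :=
  quot_spectrum s ++ block_spectrum s.

Theorem cgraph_eigenvalueE s x :
  all (fun a => 0 < a)%N s -> (0 < size s)%N ->
  eigenvalue (cgraph_lap s) x <-> x \in [seq n%:R | n <- cgraph_spectrum s].
Proof.
move=> s_pos k_gt0; split.
  case/(eigenvalue_cases s_pos) => [[b lt_b [big ->]] | [f [[b0 lt_b0 nz_f] eig_f]]].
    by rewrite map_f // mem_cat; apply/orP; right; rewrite map_f // mem_filter big mem_iota.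
  case: (quot_eigenvalue s_pos lt_b0 nz_f eig_f) => [-> | [m m_range ->]].
    by rewrite -(mulr0n 1) map_f // mem_cat inE eqxx.
  by rewrite map_f // mem_cat inE map_f ?orbT // mem_iota; lia.
case/mapP => n; rewrite mem_cat => /orP[n_quot | n_block] ->; last first.
  move: n_block => /mapP [b]; rewrite mem_filter mem_iota => /andP[big lt_b] ->.
  exact: block_eigenvalue.
have pos0 := nth_pos s_pos k_gt0.
move: n_quot; rewrite inE => /orP[/eqP -> | /mapP [m m_range ->]].
  apply: (@lift_eigenvalue s (fun=> 1) _ 0) => //; first exact: oner_neq0.
  by move=> b _; rewrite quot_const mulr0n mul0r.
have lt_m : (m < size s)%N by move: m_range; rewrite mem_iota; lia.
apply: (@lift_eigenvalue s (qvec s m) _ 0) => //; last by move=> b _; apply: quot_qvec.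
rewrite qvec_below ?pnatr_eq0 -?lt0n ?nth_pos //.
by move: m_range; rewrite mem_iota; lia.
Qed.

Lemma num_distinct_eigenvaluesE n (A : 'M[algC]_n) (es : seq algC) m :
  (forall x, eigenvalue A x <-> x \in es) ->
  num_distinct_eigenvalues_eq A m <-> size (undup es) = m.
Proof.
move=> eigE; split => [[es' [uniq_es' <- eigE']] | size_es].
  apply/perm_size/uniq_perm; rewrite ?undup_uniq // => x.
  by rewrite mem_undup; apply/idP/idP => [/eigE/eigE' | /eigE'/eigE].
by exists (undup es); split; rewrite ?undup_uniq // => x; rewrite mem_undup.
Qed.

Corollary cgraph_num_eigenvalues s m :
  all (fun a => 0 < a)%N s -> (0 < size s)%N ->
  num_distinct_eigenvalues_eq (cgraph_lap s) m
  <-> size (undup (cgraph_spectrum s)) = m.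
Proof.
move=> s_pos k_gt0; apply: iff_trans (num_distinct_eigenvaluesE _ _) _.
  by move=> x; apply: cgraph_eigenvalueE.
by rewrite undup_map_inj ?size_map //; apply: mulrIn; apply: oner_neq0.
Qed.

Lemma undup_cat_size (T : eqType) (B X : seq T) : uniq B ->
  size (undup (B ++ X)) = size B <-> {subset X <= B}.
Proof.
move=> uniq_B; split => [size_eq x x_X | sub_XB].
  apply/negPn/negP => x_notB.
  have : (size (x :: B) <= size (undup (B ++ X)))%N.
    apply: uniq_leq_size => [|y]; first by rewrite /= x_notB.
    by rewrite mem_undup mem_cat inE => /orP[/eqP -> | ->]; rewrite ?x_X ?orbT.
  by rewrite size_eq /= ltnn.
apply/eqP; rewrite -(uniq_size_uniq uniq_B) ?undup_uniq // => y.
by rewrite mem_undup mem_cat orb_idr // => /sub_XB.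
Qed.

Lemma subset_map_filter (T U : eqType) (f : T -> U) (P : pred T) r (B : seq U) :
  {subset [seq f x | x <- r & P x] <= B} <-> all (fun x => P x ==> (f x \in B)) r.
Proof.
split => [sub_B | /allP all_B y /mapP [x]].
  apply/allP => x x_r; apply/implyP => Px; apply: sub_B.
  by rewrite map_f // mem_filter Px.
by rewrite mem_filter => /andP[Px x_r] ->; apply: (implyP (all_B x x_r)).
Qed.

Local Ltac expand_block_sums :=
  do ![rewrite big_mkcond /= !big_ord_recr big_ord0 /=].

(* Four parts: the spectrum is {0, a+b+d, d, a+b+c+d} plus the block
   eigenvalues, which add nothing new exactly on the five families. *)
Lemma four_blocks_spectrum a b c d : all (fun x => 0 < x)%N [:: a; b; c; d] ->
  size (undup (cgraph_spectrum [:: a; b; c; d])) = 4%N <-> four_eig_family a b c d.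
Proof.
set s := [:: a; b; c; d] => /and5P[a_pos b_pos c_pos d_pos _]; rewrite /cgraph_spectrum.
have -> : quot_spectrum s = [:: 0; a + b + d; d; a + b + c + d]%N.
  rewrite /quot_spectrum /= /qeig /odd_tail /psum /=.
  by expand_block_sums; congr [:: _; _; _; _]; lia.
apply: iff_trans (undup_cat_size _ _) _; first by rewrite /= !inE; lia.
apply: iff_trans (subset_map_filter _ _ _ _) _; rewrite /=.
have [-> -> -> ->] : [/\ bdeg s 0%N = (a + b + d)%N, bdeg s 1%N = (a + d)%N,
                        bdeg s 2%N = (c + d)%N & bdeg s 3%N = (a + b + c)%N].
  by rewrite /bdeg; split; expand_block_sums; lia.
rewrite /= !inE /four_eig_family; split; last first.
  by case=> [|[|[|[|]]]] [-> [-> ->]]; lia.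
case/and5P => _ new_b new_c new_d _.
have b1 : b = 1%N by move: new_b; lia.
have c_cases : c = 1%N \/ c = (1 + a)%N by move: new_c; rewrite b1; lia.
have d_cases : d = 1%N \/ d = c \/ d = (a + 1 + c)%N by move: new_d; rewrite b1; lia.
by rewrite b1; case: c_cases d_cases => -> [-> | [-> | ->]]; lia.
Qed.

Lemma two_blocks_spectrum a b : (size (undup (cgraph_spectrum [:: a; b])) <= 3)%N.
Proof.
set s := [:: a; b]; set B := [:: 0; a + b; a]%N.
have sub_quot : {subset quot_spectrum s <= B}.
  have -> : quot_spectrum s = [:: 0; a + b]%N.
    rewrite /quot_spectrum /= /qeig /odd_tail /psum /=.
    by expand_block_sums; congr [:: _; _]; lia.
  by move=> y; rewrite !inE => /orP[-> | ->]; rewrite ?orbT.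
have sub_block : {subset block_spectrum s <= B}.
  by apply/subset_map_filter; rewrite /= /bdeg; expand_block_sums; rewrite !inE; lia.
apply: (@uniq_leq_size _ _ B (undup_uniq _)) => y.
by rewrite mem_undup mem_cat => /orP[/sub_quot | /sub_block].
Qed.

Lemma odd_tailS s m : (m.+1 < size s)%N ->
  odd_tail s m = (odd m.+1 * nth 0 s m.+1 + odd_tail s m.+1)%N.
Proof.
move=> lt_m; rewrite /odd_tail big_mkcond [in RHS]big_mkcond /=.
rewrite (bigD1 (Ordinal lt_m)) //= [in RHS](bigD1 (Ordinal lt_m)) //= ltnSn ltnn /= add0n.
congr (_ + _)%N; first by case: (odd m); rewrite ?mul1n ?mul0n.
apply: eq_big => // c ne_cm; rewrite -(inj_eq val_inj) /= in ne_cm.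
by have -> : (m < c)%N = (m.+1 < c)%N by move: ne_cm; lia.
Qed.

(* Six or more parts: 0 < qeig 4 < qeig 2 < qeig 1 < qeig 3 are five
   distinct eigenvalues. *)
Lemma many_blocks_spectrum s : all (fun x => 0 < x)%N s -> (6 <= size s)%N ->
  (5 <= size (undup (cgraph_spectrum s)))%N.
Proof.
move=> s_pos le6; have a_pos c : (c < 6)%N -> (0 < nth 0 s c)%N.
  by move=> lt_c; apply: nth_pos => //; apply: leq_trans le6.
set B := 0%N :: [seq qeig s m | m <- iota 1 4].
have uniq_B : uniq B.
  rewrite /B /= /qeig (@odd_tailS s 1) ?(@odd_tailS s 2) ?(@odd_tailS s 3)
          ?(@odd_tailS s 4); try lia.
  rewrite !psumS /psum big_ord0 /= !inE.
  have := a_pos 0%N; have := a_pos 1%N; have := a_pos 2%N; have := a_pos 3%N.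
  by have := a_pos 5%N; lia.
apply: (uniq_leq_size uniq_B) => y; rewrite mem_undup mem_cat /quot_spectrum in_cons.
case/predU1P => [-> | /mapP [m m_in ->]]; first by rewrite mem_head.
by rewrite in_cons map_f ?orbT // mem_iota; move: m_in; rewrite mem_iota; lia.
Qed.

Local Close Scope ring_scope.

Theorem mainTheorem10 :
  (forall a1 a2 a3 a4 : nat,
     (0 < a1)%N -> (0 < a2)%N -> (0 < a3)%N -> (0 < a4)%N ->
     (num_distinct_eigenvalues_eq (cgraph_lap [:: a1; a2; a3; a4]) 4
      <-> four_eig_family a1 a2 a3 a4)) /\
  (forall s : seq nat,
     ~~ odd (size s) -> (0 < size s)%N -> all (fun a => 0 < a)%N s ->
     (num_distinct_eigenvalues_eq (cgraph_lap s) 4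
      <-> size s = 4%N /\
          four_eig_family (nth 0 s 0) (nth 0 s 1) (nth 0 s 2) (nth 0 s 3))).
Proof.
split=> [a b c d a_pos b_pos c_pos d_pos | s even_k k_gt0 s_pos].
  have s_pos : all (fun x => 0 < x)%N [:: a; b; c; d] by rewrite /= a_pos b_pos c_pos d_pos.
  exact: iff_trans (cgraph_num_eigenvalues 4 s_pos isT) (four_blocks_spectrum s_pos).
apply: iff_trans (cgraph_num_eigenvalues 4 s_pos k_gt0) _.
case: s even_k k_gt0 s_pos => [|a [|b [|c [|d [|e [|g t]]]]]] // _ _ s_pos.
- by split=> [|[]] //; have := two_blocks_spectrum a b; lia.
- by apply: iff_trans (four_blocks_spectrum s_pos) _; split=> [|[]].
- by have := many_blocks_spectrum s_pos isT; split=> [|[]] //; lia.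
Qed.
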